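(* Let $A_1,\dots,A_m\in\mathbb{S}^n$, $b\in\mathbb{R}^m$, $C\in\mathbb{S}^n$, and let Assumption 1 hold for some $p$. If $Y\in\mathcal{M}_p$ has $\operatorname{rank}(Y)<p$ and $\operatorname{Hess}g(Y)\succeq-\varepsilon_H\operatorname{Id}$, then $S(Y)\succeq-\frac{\varepsilon_H}{2}I_n$.
   Context: $\mathbb{S}^n$: real symmetric $n\times n$ matrices; $\langle U,V\rangle=\operatorname{tr}(U^\top V)$, $\|\cdot\|$ Frobenius norm. $\mathcal{A}(X)_i=\langle A_i,X\rangle$, $\mathcal{A}^*(\nu)=\sum_i\nu_iA_i$. $\mathcal{M}_p=\{Y\in\mathbb{R}^{n\times p}:\mathcal{A}(YY^\top)=b\}$, $g(Y)=\langle CY,Y\rangle$. Assumption 1 (for $p$): either (a) $A_1Y,\dots,A_mY$ are linearly independent for all $Y\in\mathcal{M}_p$, or (b) $\operatorname{span}\{A_1Y,\dots,A_mY\}$ has constant dimension on an open neighborhood of $\mathcal{M}_p$. For $Y\in\mathcal{M}_p$: $T_Y=\{\dot Y:\langle A_iY,\dot Y\rangle=0\ \forall i\}$, $P_Y$ orthogonal projector onto $T_Y$; $G_{ij}=\langle A_iY,A_jY\rangle$, $\mu=G^\dagger\mathcal{A}(CYY^\top)$, $S(Y)=C-\mathcal{A}^*(\mu)$. The Riemannian Hessian is $\operatorname{Hess}g(Y)[\dot Y]=2P_Y(S(Y)\dot Y)$ for $\dot Y\in T_Y$; $\operatorname{Hess}g(Y)\succeq-\varepsilon_H\operatorname{Id}$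 means $\langle\dot Y,\operatorname{Hess}g(Y)[\dot Y]\rangle\ge-\varepsilon_H\|\dot Y\|^2$ for all $\dot Y\in T_Y$. *)

From HB Require Import structures.
From mathcomp Require Import all_boot all_order all_algebra.
From mathcomp Require Import reals.
From Stdlib Require Import ClassicalEpsilon.
Set Implicit Arguments. Unset Strict Implicit. Unset Printing Implicit Defensive.
Import Order.TTheory GRing.Theory Num.Theory.
Local Open Scope ring_scope.

Section Defs.
Variable R : realType.

Definition frob {k l : nat} (U V : 'M[R]_(k, l)) : R := \tr (U^T *m V).

Definition symmx {n : nat} (M : 'M[R]_n) : Prop := M^T = M.

Definition psd {n : nat} (M : 'M[R]_n) : Prop :=
  forall x : 'cV[R]_n, 0 <= (x^T *m M *m x) 0 0.

Definition is_pinv {m : nat} (G X : 'M[R]_m) : Prop :=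
  [/\ G *m X *m G = G, X *m G *m X = X, (G *m X)^T = G *m X & (X *m G)^T = X *m G].
Definition pinv {m : nat} (G : 'M[R]_m) : 'M[R]_m :=
  epsilon (inhabits 0) (is_pinv G).

Variables (n m p : nat) (A : 'I_m -> 'M[R]_n) (b : 'I_m -> R) (C : 'M[R]_n).

Definition Aop (X : 'M[R]_n) : 'cV[R]_m := \col_i frob (A i) X.
Definition Aadj (nu : 'cV[R]_m) : 'M[R]_n := \sum_i nu i 0 *: A i.

Definition onM (Y : 'M[R]_(n, p)) : Prop := forall i, frob (A i) (Y *m Y^T) = b i.

(* rows are vec(A_i Y); its rank is dim span{A_1 Y,...,A_m Y} *)
Definition AYmx (Y : 'M[R]_(n, p)) : 'M[R]_(m, n * p) :=
  \matrix_(i < m) mxvec (A i *m Y).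

Definition assumption1 : Prop :=
  (forall Y, onM Y -> row_free (AYmx Y)) \/
  (exists U : 'M[R]_(n, p) -> Prop,
      (forall Y, onM Y -> U Y) /\
      (forall Y, U Y -> exists e : R, 0 < e /\
          forall Z, frob (Z - Y) (Z - Y) < e ^+ 2 -> U Z) /\
      (exists d : nat, forall Y, U Y -> \rank (AYmx Y) = d)).

Definition tangent (Y Yd : 'M[R]_(n, p)) : Prop := forall i, frob (A i *m Y) Yd = 0.

Definition is_orth_proj (Y Z W : 'M[R]_(n, p)) : Prop :=
  tangent Y W /\ forall V, tangent Y V -> frob (Z - W) V = 0.
Definition PY (Y Z : 'M[R]_(n, p)) : 'M[R]_(n, p) :=
  epsilon (inhabits 0) (is_orth_proj Y Z).

Definition Gram (Y : 'M[R]_(n, p)) : 'M[R]_m := \matrix_(i, j) frob (A i *m Y) (A j *m Y).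
Definition mu (Y : 'M[R]_(n, p)) : 'cV[R]_m := pinv (Gram Y) *m Aop (C *m Y *m Y^T).
Definition Smat (Y : 'M[R]_(n, p)) : 'M[R]_n := C - Aadj (mu Y).

(* Riemannian Hessian of g(Y) = <CY,Y> *)
Definition Hess (Y Yd : 'M[R]_(n, p)) : 'M[R]_(n, p) := 2%:R *: PY Y (Smat Y *m Yd).

Definition hess_lb (Y : 'M[R]_(n, p)) (eps : R) : Prop :=
  forall Yd, tangent Y Yd -> - eps * frob Yd Yd <= frob Yd (Hess Y Yd).
End Defs.

(* The Hessian bound is tested on the tangent directions [x z^T] with [z] a
   nonzero vector of [ker Y], which exists because [rank Y < p].  Such a
   direction is tangent since [A_i Y z = 0], so the projector [P_Y] drops out
   of [<x z^T, P_Y (S x z^T)>], and that quantity factors as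
   [(x^T S x) |z|^2].  Dividing the Hessian inequality by [2 |z|^2 > 0] gives
   [x^T S x >= - eps/2 |x|^2]. *)
From HB Require Import structures.
From mathcomp Require Import all_boot all_order all_algebra.
From mathcomp Require Import reals.
From mathcomp Require Import ring.
From Stdlib Require Import ClassicalEpsilon.
Set Implicit Arguments. Unset Strict Implicit. Unset Printing Implicit Defensive.
Import Order.TTheory GRing.Theory Num.Theory.
Local Open Scope ring_scope.

Section Frobenius.
Variable R : realType.

Lemma frobE k l (U V : 'M[R]_(k, l)) : frob U V = \sum_i \sum_j U i j * V i j.
Proof.
rewrite /frob /mxtrace exchange_big /=; apply: eq_bigr => j _.
by rewrite !mxE; apply: eq_bigr => i _; rewrite mxE.
Qed.

Lemma frobC k l (U V : 'M[R]_(k, l)) : frob U V = frob V U.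
Proof. by rewrite !frobE; apply: eq_bigr => i _; apply: eq_bigr => j _; rewrite mulrC. Qed.

Lemma frob0r k l (U : 'M[R]_(k, l)) : frob U 0 = 0.
Proof. by rewrite /frob mulmx0 mxtrace0. Qed.

Lemma frob0l k l (U : 'M[R]_(k, l)) : frob 0 U = 0.
Proof. by rewrite frobC frob0r. Qed.

Lemma frobDr k l (U V W : 'M[R]_(k, l)) : frob U (V + W) = frob U V + frob U W.
Proof. by rewrite /frob mulmxDr mxtraceD. Qed.

Lemma frobBr k l (U V W : 'M[R]_(k, l)) : frob U (V - W) = frob U V - frob U W.
Proof. by rewrite frobDr /frob mulmxN linearN. Qed.

Lemma frobZr k l (U V : 'M[R]_(k, l)) a : frob U (a *: V) = a * frob U V.
Proof. by rewrite /frob -scalemxAr mxtraceZ. Qed.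

Lemma frobZl k l (U V : 'M[R]_(k, l)) a : frob (a *: U) V = a * frob U V.
Proof. by rewrite frobC frobZr frobC. Qed.

Lemma frob_sumr k l I (r : seq I) (P : pred I) (U : 'M[R]_(k, l)) F :
  frob U (\sum_(i <- r | P i) F i) = \sum_(i <- r | P i) frob U (F i).
Proof.
by elim/big_rec2: _ => [|i y1 y2 _ <-]; rewrite ?frob0r ?frobDr.
Qed.

Lemma frob_suml k l I (r : seq I) (P : pred I) (U : 'M[R]_(k, l)) F :
  frob (\sum_(i <- r | P i) F i) U = \sum_(i <- r | P i) frob (F i) U.
Proof. by rewrite frobC frob_sumr; apply: eq_bigr => i _; rewrite frobC. Qed.

Lemma frob_ge0 k l (U : 'M[R]_(k, l)) : 0 <= frob U U.
Proof. by rewrite frobE sumr_ge0 // => i _; rewrite sumr_ge0 // => j _; rewrite -expr2 sqr_ge0. Qed.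

Lemma frob_eq0 k l (U : 'M[R]_(k, l)) : frob U U = 0 -> U = 0.
Proof.
have sq_ge0 (x : R) : 0 <= x * x by rewrite -expr2 sqr_ge0.
rewrite frobE => /eqP; rewrite psumr_eq0 => [/allP U0|i _]; last exact: sumr_ge0.
apply/matrixP => i j; rewrite mxE.
move: (U0 i (mem_index_enum i)); rewrite psumr_eq0 // => /allP/(_ j (mem_index_enum j)).
by rewrite -expr2 sqrf_eq0 => /eqP.
Qed.

Lemma frob_gt0 k l (U : 'M[R]_(k, l)) : U != 0 -> 0 < frob U U.
Proof. by move=> U0; rewrite lt_def frob_ge0 andbT; apply: contra U0 => /eqP/frob_eq0->. Qed.

Lemma frob_cV k (x y : 'cV[R]_k) : frob x y = (x^T *m y) 0 0.
Proof. by rewrite /frob /mxtrace big_ord1. Qed.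

Lemma frob_outer k l (x y : 'cV[R]_k) (z : 'cV[R]_l) :
  frob (x *m z^T) (y *m z^T) = frob x y * frob z z.
Proof.
rewrite !frobE big_distrl /=; apply: eq_bigr => i _.
rewrite big_ord1 big_distrr /=; apply: eq_bigr => j _.
by rewrite big_ord1 !mxE !big_ord1 !mxE; ring.
Qed.

Lemma frob_mul_outer k l (M : 'M[R]_(k, l)) (x : 'cV[R]_k) (z : 'cV[R]_l) :
  frob M (x *m z^T) = frob x (M *m z).
Proof. by rewrite /frob mulmxA mxtrace_mulC mulmxA -mxtrace_tr !trmx_mul !trmxK. Qed.

(* Least squares in Frobenius form: the residual of [Z] against the span of
   the [B i] is orthogonal to every [B i].  The normal equations [c G = r] are
   solvable because [r] vanishes on [ker G]: if [G w = 0] then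
   [|sum_j w_j B_j|^2 = w^T G w = 0]. *)
Lemma frob_residual_exists m k l (B : 'I_m -> 'M[R]_(k, l)) (Z : 'M[R]_(k, l)) :
  exists c : 'rV[R]_m, forall j, frob (B j) (Z - \sum_i c 0 i *: B i) = 0.
Proof.
pose G : 'M[R]_m := \matrix_(i, j) frob (B i) (B j).
pose r : 'rV[R]_m := \row_j frob (B j) Z.
have /submxP [c rE] : (r <= G)%MS.
  rewrite submxE; apply/eqP/matrixP => i q; rewrite !mxE.
  have GK0 : G *m cokermx G = 0 by rewrite mulmx_coker.
  move: (cokermx G) GK0 => K GK0.
  have BK0 : \sum_j K j q *: B j = 0.
    apply: frob_eq0.
    have : (K^T *m (G *m K)) q q = 0 by rewrite GK0 mulmx0 mxE.
    rewrite mxE => <-; rewrite frob_suml; apply: eq_bigr => a _.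
    rewrite frobZl frob_sumr /G !mxE; congr (_ * _).
    by apply: eq_bigr => j _; rewrite frobZr mxE mulrC.
  transitivity (frob (\sum_j K j q *: B j) Z); last by rewrite BK0 frob0l.
  by rewrite frob_suml; apply: eq_bigr => j _; rewrite frobZl mxE mulrC.
exists c => j; rewrite frobBr frob_sumr.
have := congr1 (fun M : 'rV[R]_m => M 0 j) rE; rewrite !mxE => ->.
by apply/eqP; rewrite subr_eq0; apply/eqP/eq_bigr => i _; rewrite frobZr mxE frobC.
Qed.

End Frobenius.

Lemma rank_lt_ker_exists (F : fieldType) k l (Y : 'M[F]_(k, l)) :
  (\rank Y < l)%N -> exists2 z : 'cV[F]_l, z != 0 & Y *m z = 0.
Proof.
move=> rkY; have K0 : kermx Y^T != 0.
  by rewrite -mxrank_eq0 mxrank_ker mxrank_tr subn_eq0 -ltnNge.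
have [q Kq0] : exists q, row q (kermx Y^T) != 0.
  apply/existsP; move: K0; apply: contraNT; rewrite negb_exists => /forallP K0.
  by apply/eqP/row_matrixP => q; rewrite row0; apply/eqP/negbNE/K0.
have KY : kermx Y^T *m Y^T = 0 by apply/eqP; rewrite -sub_kermx.
exists (row q (kermx Y^T))^T; first by rewrite trmx_eq0.
by apply: trmx_inj; rewrite trmx_mul trmxK -row_mul KY row0 trmx0.
Qed.

Section Projection.
Variables (R : realType) (n m p : nat) (A : 'I_m -> 'M[R]_n).

Lemma orth_proj_exists (Y Z : 'M[R]_(n, p)) : exists W, is_orth_proj A Y Z W.
Proof.
have [c res_orth] := frob_residual_exists (fun i => A i *m Y) Z.
exists (Z - \sum_i c 0 i *: (A i *m Y)); split=> [i|V tV]; first exact: res_orth.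
rewrite opprB addrC subrK frob_suml big1 // => i _.
by rewrite frobZl tV mulr0.
Qed.

Lemma frob_PY_tangent (Y Z V : 'M[R]_(n, p)) :
  tangent A Y V -> frob V (PY A Y Z) = frob V Z.
Proof.
have [_ PZ_orth] : is_orth_proj A Y Z (PY A Y Z).
  by apply: epsilon_spec; apply: orth_proj_exists.
by move=> /PZ_orth /eqP; rewrite frobC frobBr subr_eq0 => /eqP ->.
Qed.

Lemma tangent_outer_ker (Y : 'M[R]_(n, p)) (x : 'cV_n) (z : 'cV_p) :
  Y *m z = 0 -> tangent A Y (x *m z^T).
Proof. by move=> Yz i; rewrite frob_mul_outer -mulmxA Yz mulmx0 frob0r. Qed.

Lemma hess_outer_ker (C : 'M[R]_n) (Y : 'M[R]_(n, p)) (x : 'cV_n) (z : 'cV_p) :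
  Y *m z = 0 ->
  frob (x *m z^T) (Hess A C Y (x *m z^T)) = 2 * frob x (Smat A C Y *m x) * frob z z.
Proof.
move=> Yz; rewrite frobZr (frob_PY_tangent _ (tangent_outer_ker x Yz)).
by rewrite mulmxA frob_outer mulrA.
Qed.

End Projection.

Theorem lemma5 (R : realType) (n m p : nat) (A : 'I_m -> 'M[R]_n) (b : 'I_m -> R)
    (C : 'M[R]_n) (epsH : R) (Y : 'M[R]_(n, p)) :
  (forall i, symmx (A i)) -> symmx C ->
  assumption1 p A b ->
  onM A b Y ->
  (\rank Y < p)%N ->
  hess_lb A C Y epsH ->
  psd (Smat A C Y + (epsH / 2%:R)%:M).
Proof.
move=> _ _ _ _ rkY hessY x.
have [z z0 Yz] := rank_lt_ker_exists rkY.
have := hessY _ (tangent_outer_ker A x Yz).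
rewrite hess_outer_ker // frob_outer.
have zz_gt0 := frob_gt0 z0.
have -> : (x^T *m (Smat A C Y + (epsH / 2%:R)%:M) *m x) 0 0
    = frob x (Smat A C Y *m x) + epsH / 2%:R * frob x x.
  by rewrite !frob_cV mulmxDr mulmxDl mul_mx_scalar -scalemxAl mulmxA !mxE.
rewrite -(pmulr_lge0 _ zz_gt0) -subr_ge0 => hess_xz.
set s := frob x _ in hess_xz *; set xx := frob x x in hess_xz *.
rewrite (_ : _ * frob z z = (2 * s * frob z z - - epsH * (xx * frob z z)) / 2).
  by rewrite divr_ge0.
by field.
Qed.
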